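(* Let spacetime be Minkowski spacetime. Let $x^\mu(\tau)$ be the worldline of an arbitrarily accelerated observer with proper time $\tau$, let $e_{(0)}{}^\mu(\tau)=dx^\mu/d\tau$ be its 4-velocity and let $e_{(i)}(\tau)$, $i=1,2,3$, be its (possibly rotating) orthonormal spatial triad along the worldline. Extend this tetrad to a reference frame $e_a(\bar x^\mu)$ by parallel transporting (with respect to the Levi-Civita connection) the observer's tetrad $e_a(\tau)$ to all neighboring points of the spacelike hyperplane orthogonal to $e_{(0)}(\tau)$, for each $\tau$; here $\bar x^\mu$ are the observer's local coordinates. If $e_a(\bar x^\mu)$ is taken as the teleparallel frame, then the gravitational energy-momentum density $t^{\mu a}$ vanishes (on the region where this frame is defined).
   Context: Signature $(+,-,-,-)$. A tetrad (frame) $e_a=e_a{}^\mu\partial_\mu$ with coframe $\theta^a=e^a{}_\mu dx^\mu$ satisfies $g_{\mu\nu}=\eta_{ab}e^a{}_\mu e^b{}_\nu$; Latin (tangent) indices are raised/lowered with $\eta_{ab}$, Greek ones with $g_{\mu\nu}$, and indices are converted between the two types with the tetrad. Taking $e_a$ as the teleparallel frame means the (Weitzenböck) torsion is $T^a{}_{\mu\nu}=\partial_\mu e^a{}_\nu-\partial_\nu e^a{}_\mu$. Define $T_a=T^b{}_{ba}$, the superpotential $\Sigma^{\lambda\mu\nu}=\tfrac14\big(T^{\lambda\mu\nu}+T^{\mu\lambda\nu}-T^{\nu\lambda\mu}\big)+\tfrac12\big(g^{\lambda\nu}T^{\mu}-g^{\lambda\mu}T^{\nu}\big)$, the torsion scalar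 $T=\Sigma^{abc}T_{abc}$, and the gravitational energy-momentum density $t^{\mu a}=k\big(4\Sigma^{bc\mu}T_{bc}{}^{a}-e^{a\mu}T\big)$ with $k=1/(16\pi)$. *)

From HB Require Import structures.
From mathcomp Require Import all_boot all_order all_algebra.
From mathcomp Require Import all_classical all_reals all_analysis.
Set Implicit Arguments. Unset Strict Implicit. Unset Printing Implicit Defensive.
Import Order.TTheory GRing.Theory Num.Theory.
Import numFieldNormedType.Exports.
Local Open Scope ring_scope.

Section Teleparallel.
Variable R : realType.
Local Notation V4 := 'rV[R]_4.
Local Notation M4 := 'M[R]_4.

(* Minkowski metric, signature (+,-,-,-); index 0 is time.  eta^{ab} = eta_{ab}. *)
Definition etaM (a b : 'I_4) : R :=
  if a == b then (if a == ord0 then 1 else -1) else 0.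

Definition mink (u v : V4) : R := \sum_(m < 4) etaM m m * u 0 m * v 0 m.

(* unit vector along coordinate m; derive f x (coord_dir m) = partial_m f (x) *)
Definition coord_dir (m : 'I_4) : V4 := delta_mx 0 m.

(* ---------- Teleparallel quantities of a frame field given in coordinates.
   F x a mu = e_a^mu (x)  (rows = tangent index a, columns = coordinate index mu). *)
Section Frame.
Variable F : V4 -> M4.

(* coframe: cof x a mu = e^a_mu, the dual basis: sum_mu e^a_mu e_b^mu = delta^a_b *)
Definition cof (x : V4) : M4 := (invmx (F x))^T.

Definition gmet (x : V4) : M4 :=
  \matrix_(m, n) \sum_(a < 4) \sum_(b < 4) etaM a b * cof x a m * cof x b n.
Definition ginv (x : V4) : M4 := invmx (gmet x).

Definition torsion (x : V4) (a m n : 'I_4) : R :=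
  derive (fun y => cof y a n) x (coord_dir m) - derive (fun y => cof y a m) x (coord_dir n).

Definition torG (x : V4) (r m n : 'I_4) : R :=
  \sum_(a < 4) F x a r * torsion x a m n.
Definition torL (x : V4) (r m n : 'I_4) : R :=
  \sum_(s < 4) gmet x r s * torG x s m n.
Definition torU (x : V4) (l m n : 'I_4) : R :=
  \sum_(p < 4) \sum_(q < 4) ginv x m p * ginv x n q * torG x l p q.
Definition torvL (x : V4) (n : 'I_4) : R := \sum_(r < 4) torG x r r n.
Definition torvU (x : V4) (m : 'I_4) : R := \sum_(n < 4) ginv x m n * torvL x n.

Definition superpot (x : V4) (l m n : 'I_4) : R :=
  4^-1 * (torU x l m n + torU x m l n - torU x n l m)
  + 2^-1 * (ginv x l n * torvU x m - ginv x l m * torvU x n).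

Definition superpotT (x : V4) (a b c : 'I_4) : R :=
  \sum_(l < 4) \sum_(m < 4) \sum_(n < 4)
     cof x a l * cof x b m * cof x c n * superpot x l m n.
Definition torT (x : V4) (a b c : 'I_4) : R :=
  \sum_(d < 4) \sum_(m < 4) \sum_(n < 4)
     etaM a d * torsion x d m n * F x b m * F x c n.

Definition torscalar (x : V4) : R :=
  \sum_(a < 4) \sum_(b < 4) \sum_(c < 4) superpotT x a b c * torT x a b c.

Definition kappa : R := (16 * pi)^-1.

(* t^{mu a} = k (4 Sigma^{bc mu} T_{bc}^a - e^{a mu} T), with
   Sigma^{bc mu} = e^b_l e^c_r Sigma^{l r mu}, T_{bc}^a = eta^{ad} T_{bcd},
   e^{a mu} = eta^{ab} e_b^mu *)
Definition gravEM (x : V4) (m a : 'I_4) : R :=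
  kappa * (4 * (\sum_(b < 4) \sum_(c < 4)
      (\sum_(l < 4) \sum_(r < 4) cof x b l * cof x c r * superpot x l r m)
      * (\sum_(d < 4) etaM a d * torT x b c d))
   - (\sum_(b < 4) etaM a b * F x b m) * torscalar x).

End Frame.

(* Observer coordinates xb = (tau, xi^1, xi^2, xi^3) label the spacetime point
   Phi xb = z(tau) + xi^i e_(i)(tau) on the hyperplane orthogonal to e_(0)(tau). *)
Definition obsPhi (z : R -> V4) (E : 'I_4 -> R -> V4) (xb : V4) : V4 :=
  z (xb 0 ord0) + \sum_(i < 4 | i != ord0) xb 0 i *: E i (xb 0 ord0).

(* Jacobian: jac f x m n = d f^n / d x^m *)
Definition jac (f : V4 -> V4) (x : V4) : M4 :=
  \matrix_(m, n) (derive f x (coord_dir m)) 0 n.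

Definition spatial_scale (s : R) (x : V4) : V4 :=
  \row_m (if m == ord0 then x 0 m else s * x 0 m).

(* Cartesian components of a frame field given as a function of the
   observer coordinates: e xb a = Cartesian components of e_a at Phi xb. *)
Definition frame_cart (e : V4 -> 'I_4 -> V4) (x : V4) : M4 :=
  \matrix_(a, n) e x a 0 n.

(* Components e_a^{mubar} of that frame in the observer coordinates xb *)
Definition frame_obs (z : R -> V4) (E : 'I_4 -> R -> V4) (e : V4 -> 'I_4 -> V4)
  (x : V4) : M4 := frame_cart e x *m invmx (jac (obsPhi z E) x).

Definition smooth_curve (f : R -> V4) : Prop :=
  forall (n : nat) (t : R), derivable (iter n (fun g : R -> V4 => derive1 g) f) t 1.

End Teleparallel.

(** Minkowski space is flat, so parallel transport keeps Cartesian components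
    constant: on the hyperplane through [z(τ)] the frame is the observer's tetrad
    [E_a(τ)].  In the coordinates [(τ, ξ)] its coframe is therefore
    [e^a_0 = η_aa <∂_τ Φ, E_a>], [e^a_i = δ^a_i], and the only non-constant entries
    are the [e^a_0], with [∂_j e^a_0 = η_aa <E_j', E_a>].  Hence the frame components
    of the torsion are [T^a_{b0} = - T^a_{0b} = w_{ab}] for spatial [b] and vanish
    otherwise, where [w_{0i}] is the acceleration and [w_{ij}] the angular velocity of
    the triad (antisymmetric by orthonormality), divided by the lapse [e^0_0].  The
    density [t^{μa}] equals [e_b^μ t^{ba}] with [t^{ba}] a polynomial in the frame
    components of the torsion, and this polynomial vanishes on every torsion of the
    above shape. *)

From HB Require Import structures.
From mathcomp Require Import all_boot all_order all_algebra.
From mathcomp Require Import all_classical all_reals all_analysis.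
From mathcomp Require Import ring lra.
Import Order.TTheory GRing.Theory Num.Theory.
Import numFieldNormedType.Exports.

Set Implicit Arguments.
Unset Strict Implicit.
Unset Printing Implicit Defensive.

Local Open Scope ring_scope.

Section BigSums.
Variable R : comPzRingType.

Lemma sum_eq_single (I : finType) (g : I -> R) i :
  (forall j, j != i -> g j = 0) -> \sum_j g j = g i.
Proof. by move=> g0; rewrite (bigD1 i) //= big1 ?addr0 // => j /g0. Qed.

Lemma exchange_sum_distr (I J : finType) (g : I -> R) (k : I -> J -> R) :
  \sum_i g i * (\sum_j k i j) = \sum_j \sum_i g i * k i j.
Proof. by under eq_bigr do rewrite big_distrr /=; rewrite exchange_big. Qed.

Lemma exchange_contr (I J : finType) (g : I -> R) (h : J -> R) (k : J -> I -> R) :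
  \sum_i g i * (\sum_j h j * k j i) = \sum_j h j * (\sum_i g i * k j i).
Proof.
rewrite exchange_sum_distr; apply: eq_bigr => j _; rewrite big_distrr /=.
by apply: eq_bigr => i _; rewrite mulrCA.
Qed.

Lemma sum_delta_mull (I : finType) (i : I) (f : I -> R) : \sum_j (i == j)%:R * f j = f i.
Proof.
rewrite (sum_eq_single (i := i)) ?eqxx ?mul1r // => j.
by rewrite eq_sym => /negPf ->; rewrite mul0r.
Qed.

Lemma nested_sum3 (I J L : finType) (f : I -> R) (g : J -> R) (h : L -> R) (X : I -> J -> L -> R) :
  \sum_i \sum_j \sum_k f i * g j * h k * X i j k =
  \sum_i f i * (\sum_j g j * (\sum_k h k * X i j k)).
Proof.
apply: eq_bigr => i _; rewrite big_distrr /=; apply: eq_bigr => j _ /=.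
by rewrite !big_distrr /=; apply: eq_bigr => k _ /=; rewrite !mulrA.
Qed.

End BigSums.

Lemma invmx_eq (R : comUnitRingType) n (A B : 'M[R]_n) : A *m B = 1%:M -> invmx A = B.
Proof.
move=> AB1; have [uA _] := mulmx1_unit AB1.
by rewrite -[B]mul1mx -(mulVmx uA) -mulmxA AB1 mulmx1.
Qed.

Lemma inord0 n : inord 0 = ord0 :> 'I_n.+1.
Proof. exact: inord_val ord0. Qed.

Section TangentSpace.
Variable R : realType.

Definition eta_n (a : nat) : R := if a == 0%N then 1 else -1.

Lemma eta_n_sqr (a : nat) : eta_n a * eta_n a = 1.
Proof. by rewrite /eta_n; case: ifP => _; ring. Qed.

(* Frame components are indexed by [nat] (only 0..3 matter) so that identities can
   be checked by evaluation at concrete indices; [K a b c] is [T^a_{bc}].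
   [torvec_tan], [torU_tan], [superpot_tan], [torscalar_tan] are [T_c], [T^{abc}],
   [Σ^{abc}], [T], and [gravEM_tan e a] is [t^{ea} / k]. *)
Section Superpotential.
Variable K : nat -> nat -> nat -> R.

Definition torvec_tan (c : nat) : R := \sum_(a < 4) K a a c.

Definition torU_tan (a b c : nat) : R := eta_n b * eta_n c * K a b c.

Definition superpot_tan (a b c : nat) : R :=
  4^-1 * (torU_tan a b c + torU_tan b a c - torU_tan c a b)
  + 2^-1 * ((a == c)%:R * eta_n a * eta_n b * torvec_tan b
            - (a == b)%:R * eta_n a * eta_n c * torvec_tan c).

Definition torscalar_tan : R :=
  \sum_(a < 4) \sum_(b < 4) \sum_(c < 4) superpot_tan a b c * (eta_n a * K a b c).

Definition gravEM_tan (e a : nat) : R :=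
  4 * (\sum_(b < 4) \sum_(c < 4) superpot_tan b c e * (eta_n a * eta_n b * K b c a))
  - (e == a)%:R * eta_n a * torscalar_tan.

End Superpotential.

Section AcceleratedTorsion.
Variable w : nat -> nat -> R.
Hypothesis w_anti : forall i j, (0 < i < 4)%N -> (0 < j < 4)%N -> w j i = - w i j.

Definition accel_torsion (a b c : nat) : R :=
  (if (c == 0%N) && (b != 0%N) then w a b else 0)
  - (if (b == 0%N) && (c != 0%N) then w a c else 0).

Let w11 : w 1 1 = 0. Proof. by have := @w_anti 1 1 isT isT; lra. Qed.
Let w22 : w 2 2 = 0. Proof. by have := @w_anti 2 2 isT isT; lra. Qed.
Let w33 : w 3 3 = 0. Proof. by have := @w_anti 3 3 isT isT; lra. Qed.
Let w21 : w 2 1 = - w 1 2. Proof. exact: w_anti. Qed.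
Let w31 : w 3 1 = - w 1 3. Proof. exact: w_anti. Qed.
Let w32 : w 3 2 = - w 2 3. Proof. exact: w_anti. Qed.

Lemma torvec_accel c : torvec_tan accel_torsion c = if c == 0%N then 0 else - w 0 c.
Proof.
rewrite /torvec_tan !big_ord_recl big_ord0 /= /accel_torsion /=.
by case: c => [|c] /=; rewrite ?w11 ?w22 ?w33; ring.
Qed.

Lemma torscalar_accel : torscalar_tan accel_torsion = 0.
Proof.
rewrite /torscalar_tan !big_ord_recl !big_ord0 /= /superpot_tan /torU_tan !torvec_accel.
rewrite /accel_torsion /eta_n /= w11 w22 w33 w21 w31 w32.
by field.
Qed.

Lemma gravEM_tan_accel e a : (e < 4)%N -> (a < 4)%N -> gravEM_tan accel_torsion e a = 0.
Proof.
move=> e4 a4; rewrite /gravEM_tan torscalar_accel mulr0 subr0.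
rewrite !big_ord_recl !big_ord0 /= /superpot_tan /torU_tan !torvec_accel /accel_torsion /eta_n /=.
by case: e e4 => [|[|[|[|//]]]] _; case: a a4 => [|[|[|[|//]]]] _ /=;
  rewrite ?w11 ?w22 ?w33 ?w21 ?w31 ?w32; field.
Qed.

End AcceleratedTorsion.

Definition time_col_coframe (c : nat -> R) (b mu : nat) : R :=
  if mu == 0%N then c b else (b == mu)%:R.

Lemma accel_torsion_time_col_coframe (c : nat -> R) (t : nat -> nat -> R) a m n :
  c 0%N != 0 -> (m < 4)%N -> (n < 4)%N ->
  \sum_(b < 4) \sum_(d < 4) time_col_coframe c b m * time_col_coframe c d n
    * accel_torsion (fun a b => t a b / c 0%N) a b d
  = accel_torsion t a m n.
Proof.
move=> c0 m4 n4; rewrite !big_ord_recl !big_ord0 /= /time_col_coframe /accel_torsion /=.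
by case: m m4 => [|[|[|[|//]]]] _; case: n n4 => [|[|[|[|//]]]] _ /=; field.
Qed.
End TangentSpace.

Section Minkowski.
Variable R : realType.

Lemma etaM_diag (a : 'I_4) : etaM R a a = eta_n R a.
Proof. by rewrite /etaM /eta_n eqxx; case: a => [[|k] ?]. Qed.

Lemma etaM_offdiag (a b : 'I_4) : a != b -> etaM R a b = 0.
Proof. by rewrite /etaM => /negPf ->. Qed.

Lemma sum_etaM (a : 'I_4) (f : 'I_4 -> R) : \sum_d etaM R a d * f d = eta_n R a * f a.
Proof.
by rewrite (sum_eq_single (i := a)) ?etaM_diag // => d da; rewrite etaM_offdiag ?mul0r // eq_sym.
Qed.

Definition etaM_mx : 'M[R]_4 := \matrix_(a, b) etaM R a b.

Lemma etaM_mx_conj (A : 'M[R]_4) i j :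
  (etaM_mx *m A *m etaM_mx) i j = eta_n R i * A i j * eta_n R j.
Proof.
rewrite !mxE (sum_eq_single (i := j)) => [|k kj]; last by rewrite [etaM_mx k j]mxE etaM_offdiag ?mulr0.
rewrite !mxE (sum_eq_single (i := i)) => [|k ki]; last by rewrite !mxE etaM_offdiag ?mul0r // eq_sym.
by rewrite !mxE !etaM_diag.
Qed.

Lemma etaM_mx_sqr : etaM_mx *m etaM_mx = 1%:M.
Proof.
apply/matrixP => a b; have := etaM_mx_conj 1%:M a b; rewrite mulmx1 => ->.
rewrite !mxE; have [<-|_] := eqVneq a b; last by rewrite mulr0 mul0r.
by rewrite mulr1 eta_n_sqr.
Qed.

End Minkowski.

Section FrameCovariance.
Variable R : realType.
Variables (F : 'rV[R]_4 -> 'M[R]_4) (x : 'rV[R]_4).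
Hypothesis F_unit : F x \in unitmx.
Local Notation Fx := (F x).
Local Notation cf := (cof F x).
Local Notation eta := (eta_n R).

Lemma sum_frame_cof b a : \sum_m Fx b m * cf a m = (b == a)%:R.
Proof.
have := congr1 (fun M : 'M[R]_4 => M b a) (mulmxV F_unit).
by rewrite !mxE /cof => <-; apply: eq_bigr => m _; rewrite mxE.
Qed.

Lemma frame_cof_contr d (f : 'I_4 -> R) : \sum_p Fx d p * (\sum_b cf b p * f b) = f d.
Proof.
rewrite exchange_sum_distr -[RHS]sum_delta_mull; apply: eq_bigr => b _.
by rewrite -sum_frame_cof big_distrl /=; apply: eq_bigr => p _; rewrite mulrA.
Qed.

Lemma cof_frame_contr a (f : 'I_4 -> R) : \sum_l cf a l * (\sum_b Fx b l * f b) = f a.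
Proof.
rewrite exchange_sum_distr -[RHS]sum_delta_mull; apply: eq_bigr => b _.
by rewrite eq_sym -sum_frame_cof big_distrl /=; apply: eq_bigr => l _; ring.
Qed.

Lemma gmetE : gmet F x = invmx Fx *m etaM_mx R *m (invmx Fx)^T.
Proof.
apply/matrixP => m n; rewrite !mxE exchange_big; apply: eq_bigr => b _.
by rewrite !mxE big_distrl /=; apply: eq_bigr => a _; rewrite /cof !mxE; ring.
Qed.

Lemma ginvE : ginv F x = Fx^T *m etaM_mx R *m Fx.
Proof.
apply: invmx_eq; rewrite gmetE -!mulmxA (mulmxA (invmx Fx)^T) -trmx_mul mulmxV //.
by rewrite trmx1 mul1mx (mulmxA (etaM_mx R)) etaM_mx_sqr mul1mx mulVmx.
Qed.

Lemma ginv_sum m n : ginv F x m n = \sum_d Fx d m * eta d * Fx d n.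
Proof.
rewrite ginvE !mxE; apply: eq_bigr => d _; rewrite !mxE.
under eq_bigr do rewrite !mxE.
by rewrite (sum_eq_single (i := d)) ?etaM_diag // => j jd; rewrite etaM_offdiag ?mulr0.
Qed.

Lemma ginv_cof_contr m (f : 'I_4 -> R) :
  \sum_p ginv F x m p * (\sum_b cf b p * f b) = \sum_b Fx b m * eta b * f b.
Proof.
under eq_bigr do rewrite ginv_sum big_distrl /=.
rewrite exchange_big /=; apply: eq_bigr => d _.
by under eq_bigr do rewrite -mulrA; rewrite -big_distrr /= frame_cof_contr.
Qed.

Definition to_coord (S : nat -> nat -> nat -> R) (l m n : 'I_4) : R :=
  \sum_a Fx a l * (\sum_b Fx b m * (\sum_c Fx c n * S a b c)).

Lemma eq_to_coord S1 S2 l m n :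
  (forall a b c, S1 a b c = S2 a b c) -> to_coord S1 l m n = to_coord S2 l m n.
Proof. by move=> S12; do 3!(apply: eq_bigr => ? _; congr (_ * _)). Qed.

Lemma to_coordD S1 S2 l m n :
  to_coord S1 l m n + to_coord S2 l m n = to_coord (fun a b c => S1 a b c + S2 a b c) l m n.
Proof.
rewrite /to_coord -big_split; apply: eq_bigr => a _ /=; rewrite -mulrDr -big_split.
congr (_ * _); apply: eq_bigr => b _ /=; rewrite -mulrDr -big_split.
by congr (_ * _); apply: eq_bigr => c _ /=; rewrite -mulrDr.
Qed.

Lemma to_coordZ k S l m n : k * to_coord S l m n = to_coord (fun a b c => k * S a b c) l m n.
Proof.
rewrite /to_coord big_distrr /=; apply: eq_bigr => a _ /=; rewrite mulrCA big_distrr.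
congr (_ * _); apply: eq_bigr => b _ /=; rewrite mulrCA big_distrr.
by congr (_ * _); apply: eq_bigr => c _ /=; rewrite mulrCA.
Qed.

Lemma to_coordN S l m n : - to_coord S l m n = to_coord (fun a b c => - S a b c) l m n.
Proof. by rewrite -mulN1r to_coordZ; apply: eq_to_coord => a b c; rewrite mulN1r. Qed.

Lemma to_coord_swap12 S l m n : to_coord S m l n = to_coord (fun a b c => S b a c) l m n.
Proof. exact: exchange_contr. Qed.

Lemma to_coord_swap23 S l m n : to_coord S l n m = to_coord (fun a b c => S a c b) l m n.
Proof. by apply: eq_bigr => a _; rewrite exchange_contr. Qed.

Lemma to_coord_cycle S l m n : to_coord S n l m = to_coord (fun a b c => S c a b) l m n.
Proof. by rewrite /to_coord exchange_contr; apply: eq_bigr => b _; rewrite exchange_contr. Qed.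

Lemma cof_to_coord_contr S l m c :
  \sum_n cf c n * to_coord S l m n = \sum_a Fx a l * (\sum_b Fx b m * S a b c).
Proof.
rewrite /to_coord exchange_contr; apply: eq_bigr => a _; congr (_ * _).
by rewrite exchange_contr; apply: eq_bigr => b _; rewrite cof_frame_contr.
Qed.

Variable K : nat -> nat -> nat -> R.
Hypothesis torsionE : forall a m n,
  torsion F x a m n = \sum_b \sum_c cf b m * cf c n * K a b c.

Lemma torsion_contr a m n :
  torsion F x a m n = \sum_b cf b m * (\sum_c cf c n * K a b c).
Proof.
rewrite torsionE; apply: eq_bigr => b _; rewrite big_distrr /=.
by apply: eq_bigr => c _; rewrite mulrA.
Qed.

Lemma torG_tan l p q :
  torG F x l p q = \sum_b cf b p * (\sum_c cf c q * (\sum_a Fx a l * K a b c)).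
Proof.
rewrite /torG; under eq_bigr do rewrite torsion_contr.
by rewrite exchange_contr; apply: eq_bigr => b _; rewrite exchange_contr.
Qed.

Lemma torU_coord l m n : torU F x l m n = to_coord (torU_tan K) l m n.
Proof.
have inner p : \sum_q ginv F x m p * ginv F x n q * torG F x l p q =
    ginv F x m p * (\sum_b cf b p *
      (\sum_c Fx c n * eta c * (\sum_a Fx a l * K a b c))).
  under eq_bigr do rewrite -mulrA; rewrite -big_distrr /=; congr (_ * _).
  under eq_bigr do rewrite torG_tan.
  by rewrite exchange_contr; apply: eq_bigr => b _; rewrite ginv_cof_contr.
rewrite /torU; under eq_bigr do rewrite inner; rewrite ginv_cof_contr.
rewrite /to_coord [RHS]exchange_contr; apply: eq_bigr => b _.
rewrite [in RHS]exchange_contr -mulrA; congr (_ * _).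
rewrite big_distrr /=; apply: eq_bigr => c _; rewrite !big_distrr /=.
by apply: eq_bigr => a _; rewrite /torU_tan; ring.
Qed.

Lemma torvL_tan n : torvL F x n = \sum_c cf c n * torvec_tan K c.
Proof.
rewrite /torvL /torG exchange_big /=.
under eq_bigr do under eq_bigr do rewrite torsion_contr.
under eq_bigr do rewrite frame_cof_contr.
by rewrite exchange_big /=; apply: eq_bigr => c _; rewrite big_distrr.
Qed.

Lemma torvU_tan m : torvU F x m = \sum_c Fx c m * eta c * torvec_tan K c.
Proof. by rewrite /torvU; under eq_bigr do rewrite torvL_tan; rewrite ginv_cof_contr. Qed.

Lemma ginv_torvU l m n : ginv F x l n * torvU F x m =
  to_coord (fun a b c => (a == c)%:R * eta a * eta b * torvec_tan K b) l m n.
Proof.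
rewrite ginv_sum torvU_tan /to_coord big_distrl /=; apply: eq_bigr => a _.
rewrite big_distrr [RHS]big_distrr /=; apply: eq_bigr => b _.
rewrite (sum_eq_single (i := a)) ?eqxx => [|c ca]; first by rewrite mul1r; ring.
by move: ca; rewrite eq_sym -val_eqE => /negPf ->; rewrite !mul0r mulr0.
Qed.

Lemma superpot_coord l m n : superpot F x l m n = to_coord (superpot_tan K) l m n.
Proof.
rewrite /superpot !torU_coord (to_coord_swap12 _ l m).
rewrite (to_coord_cycle _ l m) !ginv_torvU (to_coord_swap23 _ l m n).
rewrite !to_coordN !to_coordD !to_coordZ to_coordD.
by apply: eq_to_coord => a b c; rewrite /superpot_tan.
Qed.

Lemma superpotT_tan a b c : superpotT F x a b c = superpot_tan K a b c.
Proof.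
rewrite /superpotT nested_sum3.
under eq_bigr do under eq_bigr do under eq_bigr do rewrite superpot_coord.
under eq_bigr do under eq_bigr do rewrite cof_to_coord_contr.
under eq_bigr do rewrite exchange_contr; under eq_bigr do under eq_bigr do rewrite cof_frame_contr.
exact: cof_frame_contr.
Qed.

Lemma superpot_cof_contr b c m :
  \sum_l \sum_r cf b l * cf c r * superpot F x l r m = \sum_e Fx e m * superpot_tan K b c e.
Proof.
transitivity (\sum_l cf b l * (\sum_r cf c r * to_coord (superpot_tan K) l r m)).
  apply: eq_bigr => l _; rewrite big_distrr /=; apply: eq_bigr => r _ /=.
  by rewrite superpot_coord mulrA.
under eq_bigr do rewrite /to_coord exchange_contr.
by under eq_bigr do under eq_bigr do rewrite cof_frame_contr; rewrite cof_frame_contr.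
Qed.

Lemma torT_tan b c d : torT F x b c d = eta b * K b c d.
Proof.
rewrite /torT -(sum_etaM b (fun d' => K d' c d)); apply: eq_bigr => d' _.
transitivity (etaM R b d' * (\sum_m Fx c m * (\sum_n Fx d n * torsion F x d' m n))).
  rewrite big_distrr /=; apply: eq_bigr => m _ /=.
  by rewrite !big_distrr /=; apply: eq_bigr => n _ /=; ring.
congr (_ * _); under eq_bigr do under eq_bigr do rewrite torsion_contr.
under eq_bigr do rewrite exchange_contr; under eq_bigr do under eq_bigr do rewrite frame_cof_contr.
exact: frame_cof_contr.
Qed.

Lemma torscalar_tanE : torscalar F x = torscalar_tan K.
Proof.
apply: eq_bigr => a _; apply: eq_bigr => b _; apply: eq_bigr => c _.
by rewrite superpotT_tan torT_tan.
Qed.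

Lemma gravEM_tanE m a : gravEM F x m a = kappa R * \sum_e Fx e m * gravEM_tan K e a.
Proof.
have inner b c : (\sum_l \sum_r cf b l * cf c r * superpot F x l r m)
                 * (\sum_d etaM R a d * torT F x b c d)
    = \sum_e Fx e m * (superpot_tan K b c e * (eta a * eta b * K b c a)).
  rewrite superpot_cof_contr sum_etaM torT_tan big_distrl /=.
  by apply: eq_bigr => e _; ring.
rewrite /gravEM torscalar_tanE sum_etaM; congr (_ * _).
under [RHS]eq_bigr do rewrite mulrBr; rewrite sumrB; congr (_ - _).
  under eq_bigr do under eq_bigr do rewrite inner.
  under eq_bigr do rewrite exchange_big; rewrite exchange_big big_distrr.
  apply: eq_bigr => e _; rewrite [RHS]mulrCA; congr (_ * _).
  by rewrite big_distrr /=; apply: eq_bigr => b _; rewrite big_distrr.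
rewrite (sum_eq_single (i := a)) ?eqxx => [|e ea]; first by rewrite mul1r; ring.
by move: ea; rewrite -val_eqE => /negPf ->; rewrite !mul0r mulr0.
Qed.

End FrameCovariance.

Local Open Scope classical_set_scope.
Local Open Scope ring_scope.

Section Calculus.
Variable R : realType.

Lemma derive_cst_quotient (V W : normedModType R) (f : V -> W) (x v : V) (c : W) :
  (forall h : R, h != 0 -> h^-1 *: (f (h *: v + x) - f x) = c) -> 'D_v f x = c.
Proof.
move=> fc; rewrite /derive; apply: cvg_lim => //.
have quotient_cst : {near 0^', (fun=> c) =1 (fun h : R => h^-1 *: ((f \o shift x) (h *: v) - f x))}.
  by near=> h; rewrite /= fc //; near: h; exact: nbhs_dnbhs_neq.
exact: cvg_trans (near_eq_cvg quotient_cst) (cvg_cst c).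
Unshelve. all: by end_near.
Qed.

Lemma is_derive_coord n (g : R -> 'rV[R]_n) t (m : 'I_n) : derivable g t 1 ->
  is_derive t 1 (fun s => g s 0 m) (derive1 g t 0 m).
Proof.
move=> dg; apply: DeriveDef; first exact: (derivable_mxP _ _ _).1 dg 0 m.
have := congr1 (fun M : 'rV[R]_n => M 0 m) (derive_mx dg).
by rewrite derive1E mxE => ->.
Qed.

Lemma cvg_time_comp (g : R -> 'rV[R]_4) (xb : 'rV[R]_4) : derivable g (xb 0 ord0) 1 ->
  (fun y : 'rV[R]_4 => g (y 0 ord0)) @ xb --> g (xb 0 ord0).
Proof.
move=> dg; apply: (continuous_cvg _ _ (@coord_continuous R 1 4 0 ord0 xb)).
exact/differentiable_continuous/derivable1_diffP.
Qed.

Lemma is_derive0_segment_cst (f : R -> R) (a b : R) : a <= b ->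
  (forall r, a <= r <= b -> is_derive r 1 f 0) -> f b = f a.
Proof.
move=> ab f'0; have f_cont : {within `[a, b], continuous f}.
  apply: continuous_in_subspaceT => r; rewrite inE /= in_itv /= => rab.
  have [df _] := f'0 r rab.
  exact/differentiable_continuous/derivable1_diffP.
have f'0_open r : r \in `]a, b[ -> is_derive r 1 f 0.
  by rewrite in_itv /= => /andP[ar rb]; apply: f'0; rewrite !ltW.
have [c _] := MVT_segment ab f'0_open f_cont.
by rewrite mul0r => /eqP; rewrite subr_eq0 => /eqP.
Qed.

Lemma shift_coord_dirE (h : R) (mu k : 'I_4) (y : 'rV[R]_4) :
  (h *: coord_dir R mu + y) 0 k = (if mu == k then h else 0) + y 0 k.
Proof. by rewrite !mxE eqxx /= eq_sym; case: (mu == k); rewrite ?mulr1 ?mulr0. Qed.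

Lemma mink_sym (u v : 'rV[R]_4) : mink u v = mink v u.
Proof. by apply: eq_bigr => m _; rewrite mulrAC. Qed.

Lemma mink_addZl (u w v : 'rV[R]_4) (k : R) : mink (u + k *: w) v = mink u v + k * mink w v.
Proof. by rewrite /mink big_distrr -big_split; apply: eq_bigr => m _ /=; rewrite !mxE; ring. Qed.

Lemma cvg_mink {T : Type} {F : set_system T} {FF : Filter F} (u v : T -> 'rV[R]_4) u0 v0 :
  u @ F --> u0 -> v @ F --> v0 -> (fun x => mink (u x) (v x)) @ F --> mink u0 v0.
Proof.
move=> uu0 vv0; apply: (cvg_big (op := +%R) (x0 := 0) add_continuous) => m _.
apply: cvgM; first apply: cvgM; first exact: cvg_cst.
  exact: continuous_cvg _ (@coord_continuous R 1 4 0 m u0) uu0.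
exact: continuous_cvg _ (@coord_continuous R 1 4 0 m v0) vv0.
Qed.

End Calculus.

Section Observer.
Variable R : realType.
Variables (z : R -> 'rV[R]_4) (E : 'I_4 -> R -> 'rV[R]_4)
  (e : 'rV[R]_4 -> 'I_4 -> 'rV[R]_4) (D : set 'rV[R]_4).
Hypothesis z_smooth : smooth_curve z.
Hypothesis E_smooth : forall a, smooth_curve (E a).
Hypothesis E_orthonormal : forall t a b, mink (E a t) (E b t) = etaM R a b.
Hypothesis D_open : open D.
Hypothesis D_scale : forall y s, D y -> 0 <= s <= 1 -> D (spatial_scale s y).
Hypothesis e_on_worldline : forall y a, D y -> e (spatial_scale 0 y) a = E a (y 0 ord0).
Hypothesis e_transported : forall y a s, D y -> D (spatial_scale s y) ->
  is_derive s 1 (fun r => e (spatial_scale r y) a) 0.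

Lemma frame_eq_tetrad y a : D y -> e y a = E a (y 0 ord0).
Proof.
move=> Dy; have scale1 : spatial_scale 1 y = y.
  by apply/matrixP => i j; rewrite !mxE (ord1 i); case: ifP => // _; rewrite mul1r.
rewrite -[in LHS]scale1 -(@e_on_worldline y a Dy); apply/matrixP => i j; rewrite (ord1 i).
apply: (is_derive0_segment_cst (f := fun r => e (spatial_scale r y) a 0 j)) => // r r01.
have [de de0] := @e_transported y a r Dy (D_scale Dy r01).
by have := is_derive_coord j de; rewrite derive1E de0 mxE.
Qed.

Definition obsPhi_dtime (y : 'rV[R]_4) : 'rV[R]_4 :=
  derive1 z (y 0 ord0) + \sum_(i < 4 | i != ord0) y 0 i *: derive1 (E i) (y 0 ord0).

Definition obsPhi_partial (y : 'rV[R]_4) (mu : 'I_4) : 'rV[R]_4 :=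
  if mu == ord0 then obsPhi_dtime y else E mu (y 0 ord0).

Lemma derive_obsPhi_time y : 'D_(coord_dir R ord0) (obsPhi z E) y = obsPhi_dtime y.
Proof.
rewrite /derive; apply: cvg_lim => //.
have -> : (fun h : R => h^-1 *: ((obsPhi z E \o shift y) (h *: coord_dir R ord0) - obsPhi z E y)) =
   (fun h : R => h^-1 *: (z (h *: 1 + y 0 ord0) - z (y 0 ord0)) +
      \sum_(i < 4 | i != ord0) y 0 i *: (h^-1 *: (E i (h *: 1 + y 0 ord0) - E i (y 0 ord0)))).
  apply/funext => h /=; rewrite /obsPhi shift_coord_dirE eqxx.
  have -> : \sum_(i < 4 | i != ord0) (h *: coord_dir R ord0 + y) 0 i *: E i (h + y 0 ord0) =
            \sum_(i < 4 | i != ord0) y 0 i *: E i (h + y 0 ord0).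
    by apply: eq_bigr => i i0; rewrite shift_coord_dirE eq_sym (negPf i0) add0r.
  rewrite [h *: 1]mulr1 opprD addrACA -sumrB scalerDr scaler_sumr; congr (_ + _).
  by apply: eq_bigr => i _; rewrite -scalerBr !scalerA mulrC.
rewrite /obsPhi_dtime derive1E; apply: cvgD; first exact: @z_smooth 0 (y 0 ord0).
apply: (cvg_big (op := +%R) (x0 := 0) add_continuous) => i _.
by rewrite derive1E; apply: cvgZl_tmp; exact: @E_smooth i 0 (y 0 ord0).
Qed.

Lemma derive_obsPhi_spatial y mu : mu != ord0 ->
  'D_(coord_dir R mu) (obsPhi z E) y = E mu (y 0 ord0).
Proof.
move=> mu0; apply: derive_cst_quotient => h h0.
rewrite /obsPhi shift_coord_dirE (negPf mu0) add0r.
have -> : \sum_(i < 4 | i != ord0) (h *: coord_dir R mu + y) 0 i *: E i (y 0 ord0) =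
          h *: E mu (y 0 ord0) + \sum_(i < 4 | i != ord0) y 0 i *: E i (y 0 ord0).
  rewrite (bigD1 mu) //= [in RHS](bigD1 mu) //= addrA; congr (_ + _).
    by rewrite shift_coord_dirE eqxx scalerDl.
  by apply: eq_bigr => i /andP[i0 imu]; rewrite shift_coord_dirE eq_sym (negPf imu) add0r.
by rewrite addrCA addrK scalerA mulVf // scale1r.
Qed.

Lemma derive_obsPhi y mu : 'D_(coord_dir R mu) (obsPhi z E) y = obsPhi_partial y mu.
Proof.
rewrite /obsPhi_partial; have [->|mu0] := eqVneq mu ord0.
  exact: derive_obsPhi_time.
exact: derive_obsPhi_spatial.
Qed.

Definition tetrad_mx (t : R) : 'M[R]_4 := \matrix_(a, n) E a t 0 n.

Lemma tetrad_mx_orthonormal t :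
  tetrad_mx t *m (etaM_mx R *m (tetrad_mx t)^T *m etaM_mx R) = 1%:M.
Proof.
apply/matrixP => a b; rewrite !mxE.
under eq_bigr do rewrite etaM_mx_conj !mxE.
transitivity (mink (E a t) (E b t) * eta_n R b).
  by rewrite /mink big_distrl /=; apply: eq_bigr => k _; rewrite etaM_diag; ring.
rewrite E_orthonormal; have [<-|ab] := eqVneq a b; first by rewrite etaM_diag eta_n_sqr.
by rewrite etaM_offdiag // mul0r.
Qed.

Lemma tetrad_mx_unit t : tetrad_mx t \in unitmx.
Proof. by have [] := mulmx1_unit (tetrad_mx_orthonormal t). Qed.

Definition time_coframe (a : 'I_4) (y : 'rV[R]_4) : R :=
  eta_n R a * mink (obsPhi_dtime y) (E a (y 0 ord0)).

Definition obs_coframe (y : 'rV[R]_4) : nat -> nat -> R :=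
  time_col_coframe (fun b => time_coframe (inord b) y).

Definition obs_coframe_mx (y : 'rV[R]_4) : 'M[R]_4 := \matrix_(a, mu) obs_coframe y a mu.

Lemma jac_obsPhi_tetrad y :
  jac (obsPhi z E) y *m (etaM_mx R *m (tetrad_mx (y 0 ord0))^T *m etaM_mx R)
  = (obs_coframe_mx y)^T.
Proof.
apply/matrixP => mu a; rewrite !mxE.
under eq_bigr do rewrite etaM_mx_conj !mxE derive_obsPhi.
transitivity (eta_n R a * mink (obsPhi_partial y mu) (E a (y 0 ord0))).
  by rewrite /mink big_distrr /=; apply: eq_bigr => k _; rewrite etaM_diag; ring.
rewrite /obs_coframe /time_col_coframe /obsPhi_partial /time_coframe inord_val.
have [->|mu0] := eqVneq mu ord0 => //=.
rewrite (negPf mu0 : (mu == 0 :> nat) = false) E_orthonormal val_eqE.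
have [<-|amu] := eqVneq a mu; first by rewrite etaM_diag eta_n_sqr.
by rewrite etaM_offdiag 1?eq_sym // mulr0.
Qed.

Lemma jac_obsPhiE y : jac (obsPhi z E) y = (obs_coframe_mx y)^T *m tetrad_mx (y 0 ord0).
Proof. by rewrite -jac_obsPhi_tetrad -mulmxA (mulmx1C (tetrad_mx_orthonormal _)) mulmx1. Qed.

Lemma det_obs_coframe_mx y : \det (obs_coframe_mx y) = time_coframe ord0 y.
Proof.
rewrite det_trig; last first.
  apply/is_trig_mxP => i j ij; rewrite mxE /obs_coframe /time_col_coframe.
  by rewrite (gtn_eqF (leq_ltn_trans (leq0n i) ij)) (ltn_eqF ij).
rewrite big_ord_recl big1 ?mulr1 => [|i _]; rewrite mxE /obs_coframe /time_col_coframe //=.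
  by rewrite inord0.
by rewrite eqxx.
Qed.

Lemma jac_obsPhi_unit y : (jac (obsPhi z E) y \in unitmx) = (time_coframe ord0 y != 0).
Proof.
rewrite unitmxE jac_obsPhiE det_mulmx det_tr det_obs_coframe_mx unitrM.
by rewrite -unitmxE tetrad_mx_unit andbT unitfE.
Qed.

Lemma cvg_obsPhi_dtime (xb : 'rV[R]_4) : obsPhi_dtime @ xb --> obsPhi_dtime xb.
Proof.
have z'_cvg := cvg_time_comp (g := derive1 z) (@z_smooth 1 (xb 0 ord0)).
have E'_cvg : (fun y => \sum_(i < 4 | i != ord0) y 0 i *: derive1 (E i) (y 0 ord0)) @ xb -->
    \sum_(i < 4 | i != ord0) xb 0 i *: derive1 (E i) (xb 0 ord0).
  apply: (cvg_big (op := +%R) (x0 := 0) add_continuous) => i _.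
  apply: cvgZ; first exact: (@coord_continuous R 1 4 0 i xb).
  exact: (cvg_time_comp (g := derive1 (E i)) (@E_smooth i 1 _)).
exact: cvgD z'_cvg E'_cvg.
Qed.

Lemma cvg_time_coframe a (xb : 'rV[R]_4) : time_coframe a @ xb --> time_coframe a xb.
Proof.
have E_cvg := cvg_time_comp (g := E a) (@E_smooth a 0 (xb 0 ord0)).
exact: cvgM (cvg_cst _) (@cvg_mink R _ (nbhs xb) _ _ _ _ _ (@cvg_obsPhi_dtime xb) E_cvg).
Qed.

Section RegularPoint.
Variable y : 'rV[R]_4.
Hypotheses (Dy : D y) (lapse_neq0 : time_coframe ord0 y != 0).

Lemma frame_obsE : frame_obs z E e y = invmx (obs_coframe_mx y)^T.
Proof.
have frame_cart_tetrad : frame_cart e y = tetrad_mx (y 0 ord0).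
  by apply/matrixP => a n; rewrite !mxE frame_eq_tetrad.
symmetry; apply: invmx_eq.
by rewrite /frame_obs frame_cart_tetrad mulmxA -jac_obsPhiE mulmxV // jac_obsPhi_unit.
Qed.

Lemma frame_obs_unit : frame_obs z E e y \in unitmx.
Proof. by rewrite frame_obsE unitmx_inv unitmx_tr unitmxE det_obs_coframe_mx unitfE. Qed.

Lemma cof_frame_obs a mu : cof (frame_obs z E e) y a mu = obs_coframe y a mu.
Proof. by rewrite /cof frame_obsE invmxK trmxK mxE. Qed.

End RegularPoint.

Lemma obsPhi_dtime_shift xb h j : j != ord0 ->
  obsPhi_dtime (h *: coord_dir R j + xb) = obsPhi_dtime xb + h *: derive1 (E j) (xb 0 ord0).
Proof.
move=> j0; rewrite /obsPhi_dtime shift_coord_dirE (negPf j0) add0r -addrA; congr (_ + _).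
under eq_bigr => i i0 do rewrite shift_coord_dirE scalerDl.
rewrite big_split /= addrC; congr (_ + _).
rewrite (bigD1 j) //= eqxx big1 ?addr0 // => i /andP[_ ij].
by rewrite eq_sym (negPf ij) scale0r.
Qed.

Definition tetrad_rotation (t : R) (a j : 'I_4) : R := mink (derive1 (E j) t) (E a t).

Lemma mink_derive_tetrad a b t :
  mink (derive1 (E a) t) (E b t) + mink (E a t) (derive1 (E b) t) = 0.
Proof.
pose f m : R -> R := (cst (etaM R m m) * (fun s => E a s 0 m)) * (fun s => E b s 0 m).
pose df m : R := etaM R m m * E a t 0 m * derive1 (E b) t 0 m
   + E b t 0 m * (etaM R m m * derive1 (E a) t 0 m + E a t 0 m * 0).
have f'E : is_derive t 1 (\sum_(m < 4) f m) (\sum_(m < 4) df m).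
  apply: is_derive_sum => m; apply: is_deriveM; last exact: is_derive_coord (@E_smooth b 0 t).
  by apply: is_deriveM; exact: is_derive_coord (@E_smooth a 0 t).
have f_cst : \sum_(m < 4) f m = cst (etaM R a b).
  by apply/funext => s; rewrite fct_sumE -(E_orthonormal s a b).
have : \sum_(m < 4) df m = 0.
  by move: f'E; rewrite f_cst => f'E; rewrite -(@derive_val _ _ _ _ _ _ _ f'E) derive_cst.
move=> <-; rewrite /mink -big_split; apply: eq_bigr => m _ /=; rewrite /df; ring.
Qed.

Lemma tetrad_rotation_anti t a j : tetrad_rotation t j a = - tetrad_rotation t a j.
Proof.
rewrite /tetrad_rotation (mink_sym (derive1 (E a) t)).
by have := mink_derive_tetrad j a t; lra.
Qed.

Definition obs_torsion (xb : 'rV[R]_4) (a j : nat) : R :=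
  eta_n R a * tetrad_rotation (xb 0 ord0) (inord a) (inord j).

Definition obs_accel (xb : 'rV[R]_4) (a b : nat) : R :=
  obs_torsion xb a b / time_coframe ord0 xb.

Lemma obs_accel_anti xb i j : (0 < i < 4)%N -> (0 < j < 4)%N ->
  obs_accel xb j i = - obs_accel xb i j.
Proof.
move=> /andP[i0 _] /andP[j0 _]; rewrite /obs_accel /obs_torsion /eta_n.
by rewrite !ifN ?lt0n_neq0 // tetrad_rotation_anti; ring.
Qed.

Section TorsionAtRegularPoint.
Variable xb : 'rV[R]_4.
Hypotheses (Dxb : D xb) (xb_regular : time_coframe ord0 xb != 0).

Lemma near_regular : \forall y \near xb, D y /\ time_coframe ord0 y != 0.
Proof.
have lapse_gt0 : 0 < `|time_coframe ord0 xb| by rewrite normr_gt0.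
have lapse_close := cvgr_dist_lt _ _ (@cvg_time_coframe ord0 xb) _ lapse_gt0.
have D_near : \forall y \near xb, D y by exact: D_open.
near=> y; split; first by near: y.
apply/negP => /eqP y0.
have : `|time_coframe ord0 xb - time_coframe ord0 y| < `|time_coframe ord0 xb|.
  by near: y; exact: lapse_close.
by rewrite y0 subr0 ltxx.
Unshelve. all: by end_near.
Qed.

Lemma near_cof_frame_obs a n :
  \forall y \near xb, cof (frame_obs z E e) y a n = obs_coframe y a n.
Proof.
apply: filterS near_regular => y [Dy y0]; exact: cof_frame_obs.
Qed.

Lemma derive_cof_frame_obs_spatial a n v : n != ord0 ->
  'D_v (fun y => cof (frame_obs z E e) y a n) xb = 0.
Proof.
move=> n0; rewrite (near_eq_derive _ (near_cof_frame_obs a n)).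
by rewrite /obs_coframe /time_col_coframe (negPf n0 : (n == 0 :> nat) = false) derive_cst.
Qed.

Lemma derive_cof_frame_obs_time a j : j != ord0 ->
  'D_(coord_dir R j) (fun y => cof (frame_obs z E e) y a ord0) xb
  = eta_n R a * tetrad_rotation (xb 0 ord0) a j.
Proof.
move=> j0; rewrite (near_eq_derive _ (near_cof_frame_obs a ord0)).
apply: derive_cst_quotient => h h0.
rewrite /obs_coframe /time_col_coframe /= inord_val /time_coframe.
rewrite obsPhi_dtime_shift // shift_coord_dirE (negPf j0) add0r mink_addZl.
rewrite -mulrBr addrC addKr.
have scaleRE (k r : R) : k *: r = k * r by [].
by rewrite scaleRE /tetrad_rotation; field.
Qed.

Lemma torsion_frame_obs a m n :
  torsion (frame_obs z E e) xb a m n = accel_torsion (obs_torsion xb) a m n.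
Proof.
rewrite /torsion /accel_torsion /obs_torsion !inord_val.
have [->|n0] := eqVneq n ord0; have [->|m0] := eqVneq m ord0;
  rewrite /= ?(negPf m0 : (m == 0 :> nat) = false) ?(negPf n0 : (n == 0 :> nat) = false) /=.
- by rewrite !subrr.
- by rewrite derive_cof_frame_obs_time // derive_cof_frame_obs_spatial // !subr0.
- by rewrite derive_cof_frame_obs_time // derive_cof_frame_obs_spatial // sub0r.
- by rewrite !derive_cof_frame_obs_spatial // !subrr.
Qed.

Lemma torsion_frame_obs_tan a m n :
  torsion (frame_obs z E e) xb a m n =
  \sum_b \sum_c cof (frame_obs z E e) xb b m * cof (frame_obs z E e) xb c n
                * accel_torsion (obs_accel xb) a b c.
Proof.
under eq_bigr do under eq_bigr do rewrite !(cof_frame_obs Dxb xb_regular).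
have := @accel_torsion_time_col_coframe _ (fun b => time_coframe (inord b) xb)
  (obs_torsion xb) a m n.
rewrite inord0 => /(_ xb_regular (ltn_ord m) (ltn_ord n)) ->.
exact: torsion_frame_obs.
Qed.

Lemma gravEM_frame_obs m a :
  gravEM (frame_obs z E e) xb m a
  = kappa R * \sum_b frame_obs z E e xb b m * gravEM_tan (accel_torsion (obs_accel xb)) b a.
Proof.
by rewrite (gravEM_tanE (frame_obs_unit Dxb xb_regular) (@torsion_frame_obs_tan)).
Qed.

End TorsionAtRegularPoint.
End Observer.

Theorem mainTheorem1 (R : realType) (z : R -> 'rV[R]_4)
  (E : 'I_4 -> R -> 'rV[R]_4) (e : 'rV[R]_4 -> 'I_4 -> 'rV[R]_4)
  (D : set 'rV[R]_4) :
  smooth_curve z ->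
  (forall a, smooth_curve (E a)) ->
  (forall t, E ord0 t = derive1 z t) ->
  (forall t a b, mink (E a t) (E b t) = etaM R a b) ->
  open D ->
  (forall y s, D y -> 0 <= s <= 1 -> D (spatial_scale s y)) ->
  (forall y a, D y -> e (spatial_scale 0 y) a = E a (y 0 ord0)) ->
  (forall y a s, D y -> D (spatial_scale s y) ->
       is_derive s 1 (fun r => e (spatial_scale r y) a) 0) ->
  forall xb, D xb -> jac (obsPhi z E) xb \in unitmx ->
  forall m a, gravEM (frame_obs z E e) xb m a = 0.
Proof.
move=> z_smooth E_smooth _ E_orthonormal D_open D_scale e_on_worldline e_transported
  xb Dxb jac_unit m a.
have lapse_neq0 : time_coframe z E ord0 xb != 0 by rewrite -jac_obsPhi_unit.
rewrite gravEM_frame_obs // big1 ?mulr0 // => b _.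
rewrite (gravEM_tan_accel _ (ltn_ord b) (ltn_ord a)) ?mulr0 // => i j.
exact: obs_accel_anti.
Qed.
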